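(* Let $G$ be a digraph, let $X\subseteq V(G)$, let $r\ge1$ and let $c=\mathrm{wcol}_r(G)$. Then the number of distinct distance-$r$ vectors $D_r^-(v,X)$, $v\in V(G)$, is bounded by $((r+2)\cdot c\cdot|X|)^c$, and in particular $\nu_r^-(G,X)\le((r+2)\cdot c\cdot|X|)^c$.
   Context: For a linear order $L$ of $V(G)$, $u$ is weakly $r$-reachable from $v$ if there is a directed path of length at most $r$ from $u$ to $v$ or from $v$ to $u$ on which $u$ is the $L$-minimum; $\mathrm{WReach}_r[G,L,v]$ is the set of such $u$; $\mathrm{wcol}_r(G)=\min_L\max_{v}|\mathrm{WReach}_r[G,L,v]|$. For $A=\{a_1,\dots,a_{|A|}\}\subseteq V(G)$ (with a fixed enumeration) and $v\in V(G)$, the distance-$r$ vector $D_r^-(v,A)=(d_1,\dots,d_{|A|})$ has $d_i=\mathrm{dist}(a_i,v)$ (length of a shortest directed path from $a_i$ to $v$) if this is at most $r$, and $d_i=\infty$ otherwise. $N_r^-(v)$ is the set of vertices from which $v$ is reachable by a directed path of length at most $r$, and $\nu_r^-(G,X)=|\{N_r^-(v)\cap X : v\in V(G)\}|$. *)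

(* A digraph is a finite type T of vertices with an arbitrary
   edge relation e : rel T (e x y = there is an arc x -> y). *)
From mathcomp Require Import all_boot.
Set Implicit Arguments. Unset Strict Implicit. Unset Printing Implicit Defensive.

Section Digraph.
Variables (T : finType) (e : rel T).

Fixpoint walk (k : nat) (x y : T) : bool :=
  match k with
  | 0 => x == y
  | k'.+1 => [exists w, e x w && walk k' w y]
  end.

Fixpoint cwalk (P : pred T) (k : nat) (x y : T) : bool :=
  match k with
  | 0 => (x == y) && P x
  | k'.+1 => P x && [exists w, e x w && cwalk P k' w y]
  end.

(* A linear order on V(G) is given by an injective rank function L : T -> nat,
   u <_L w iff L u < L w. *)
Definition WReach (r : nat) (L : T -> nat) (v : T) : {set T} :=
  [set u | [exists k : 'I_r.+1,
     cwalk (fun w => L u <= L w) k u v || cwalk (fun w => L u <= L w) k v u]].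

Definition wcol (r : nat) : nat :=
  \big[minn/#|T|]_(L : {ffun T -> 'I_#|T|} | injectiveb L)
     \max_(v : T) #|WReach r (fun x => nat_of_ord (L x)) v|.

(* dist(a,v) if at most r, None (= infinity) otherwise *)
Definition distr (r : nat) (a v : T) : option nat :=
  let k := find (fun k => walk k a v) (iota 0 r.+1) in
  if k <= r then Some k else None.

Definition Dvec (r : nat) (X : {set T}) (v : T) : seq (option nat) :=
  [seq distr r a v | a <- enum X].

Definition num_Dvec (r : nat) (X : {set T}) : nat :=
  size (undup [seq Dvec r X v | v <- enum T]).

Definition Nin (r : nat) (v : T) : {set T} :=
  [set u | [exists k : 'I_r.+1, walk k u v]].

Definition nu (r : nat) (X : {set T}) : nat :=
  #|[set Nin r v :&: X | v : T]|.

End Digraph.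

From mathcomp Require Import all_boot.
From mathcomp Require Import zify.
Set Implicit Arguments. Unset Strict Implicit. Unset Printing Implicit Defensive.

(* Fix a rank function L attaining wcol_r(G) = c and let Y be the union of the sets WReach_r[L,a], a in X, so that
   |Y| <= c|X|.  The L-minimal vertex m of a shortest walk from a in X to v
   lies both in WReach_r[L,a], hence in Y, and in WReach_r[L,v]; the walk
   splits at m, so dist(a,v) is the least dist(a,m) + dist(m,v) over such m.
   Hence D_r^-(v,X) is determined by the at most c pairs (m, dist(m,v)) with
   m in Y and in WReach_r[L,v], and there are at most (|Y|(r+1) + 1)^c sets
   of at most c such pairs.  Finally N_r^-(v) /\ X is read off D_r^-(v,X). *)

Definition first_le (n : nat) (P : pred nat) : option nat :=
  let k := find P (iota 0 n.+1) in if k <= n then Some k else None.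

Variant first_le_spec (n : nat) (P : pred nat) : option nat -> Type :=
  | FirstLeSome k of k <= n & P k & (forall j, P j -> k <= j) :
      first_le_spec n P (Some k)
  | FirstLeNone of (forall j, j <= n -> ~~ P j) : first_le_spec n P None.

Lemma first_leP n P : first_le_spec n P (first_le n P).
Proof.
have before j : j < find P (iota 0 n.+1) -> ~~ P j.
  move=> lt_j; have jn : j < n.+1.
    by apply: leq_trans lt_j _; have := find_size P (iota 0 n.+1); rewrite size_iota.
  by have := before_find 0 lt_j; rewrite nth_iota // add0n => ->.
rewrite /first_le; case: ifPn => [kn | ]; last first.
  by rewrite -ltnNge => nk; constructor=> j jn; apply: before; apply: leq_ltn_trans nk.
constructor => // [|j]; last by apply: contraTT; rewrite -ltnNge; apply: before.
have := nth_find 0 (_ : has P (iota 0 n.+1)); rewrite nth_iota ?add0n //.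
by apply; rewrite has_find size_iota.
Qed.

Lemma eq_first_le n (P Q : pred nat) :
  (forall k, k <= n -> P k -> exists2 j, j <= k & Q j) ->
  (forall k, k <= n -> Q k -> exists2 j, j <= k & P j) ->
  first_le n P = first_le n Q.
Proof.
move=> PQ QP.
case: first_leP => [k kn Pk minP | noP]; case: first_leP => [l ln Ql minQ | noQ] //.
- have [j jk Qj] := PQ k kn Pk; have [i il Pi] := QP l ln Ql.
  by congr Some; apply/eqP; rewrite eqn_leq (leq_trans (minP _ Pi)) ?(leq_trans (minQ _ Qj)).
- by have [j jk Qj] := PQ k kn Pk; have := noQ j (leq_trans jk kn); rewrite Qj.
- by have [j jl Pj] := QP l ln Ql; have := noP j (leq_trans jl ln); rewrite Pj.
Qed.

Lemma leq_card_bigcup (I U : finType) (P : pred I) (F : I -> {set U}) :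
  #|\bigcup_(i | P i) F i| <= \sum_(i | P i) #|F i|.
Proof.
elim/big_rec2: _ => [|i n A _ IH]; first by rewrite cards0.
by rewrite (leq_trans (leq_card_setU _ _)) ?leq_add2l.
Qed.

Lemma card_small_subsets (U : finType) (A : {set U}) c :
  #|[set B : {set U} | (B \subset A) && (#|B| <= c)]| <= #|A|.+1 ^ c.
Proof.
pose code (B : {set U}) : {ffun 'I_c -> option U} :=
  [ffun j : 'I_c => nth None [seq Some x | x <- enum B] j].
have mem_code (B : {set U}) x : #|B| <= c -> (x \in B) = [exists j, code B j == Some x].
  move=> Bc; apply/idP/existsP => [xB | [j /eqP]].
    have jc : index x (enum B) < c by rewrite (leq_trans _ Bc) // cardE index_mem mem_enum.
    by exists (Ordinal jc); rewrite ffunE (nth_map x) ?nth_index ?index_mem ?mem_enum.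
  rewrite ffunE; case: (ltnP j (size (enum B))) => [js|]; last first.
    by rewrite -(size_map Some) => /(nth_default None)->.
  by rewrite (nth_map x) // => -[<-]; rewrite -mem_enum mem_nth.
pose O := None |: (Some @: A).
have cardO : #|O| = #|A|.+1.
  rewrite cardsU1 card_imset; last exact: Some_inj.
  suff -> : None \notin Some @: A by [].
  by apply/imsetP => -[].
set S := [set B | _].
have code_inj : {in S &, injective code}.
  move=> B1 B2; rewrite !inE => /andP[_ B1c] /andP[_ B2c] eq_code.
  by apply/setP => x; rewrite (mem_code _ _ B1c) (mem_code _ _ B2c) eq_code.
rewrite -cardO -[c in _ ^ c]card_ord -card_ffun_on -(card_in_imset code_inj).
apply/subset_leq_card/subsetP => f /imsetP[B]; rewrite inE => /andP[/subsetP BA _] ->.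
apply/ffun_onP => j; rewrite ffunE.
case: (ltnP j (size [seq Some x | x <- enum B])) => [/(mem_nth None)|/(nth_default None)->].
  by case/mapP=> x; rewrite mem_enum => /BA xA ->; rewrite !inE imset_f.
by rewrite !inE.
Qed.

Lemma size_undup_map_le (T U : finType) (A : eqType) (S : {pred U})
    (f : T -> U) (G : U -> A) (g : T -> A) :
  (forall v, f v \in S) -> (forall v, g v = G (f v)) ->
  size (undup [seq g v | v <- enum T]) <= #|S|.
Proof.
move=> fS gG; rewrite cardE -(size_map G).
apply: uniq_leq_size (undup_uniq _) _ => s; rewrite mem_undup => /mapP[v _ ->].
by rewrite gG map_f ?mem_enum.
Qed.

Lemma card_imset_le_size_undup (T U : finType) (A : eqType) (g : T -> A) (h : A -> U) :
  #|[set h (g v) | v : T]| <= size (undup [seq g v | v <- enum T]).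
Proof.
rewrite -(size_map h); apply: leq_trans (card_size _).
apply/subset_leq_card/subsetP => S /imsetP[v _ ->].
by rewrite map_f // mem_undup map_f ?mem_enum.
Qed.

Section Walks.
Variables (T : finType) (e : rel T).

Lemma walk_cat m n x y z : walk e m x y -> walk e n y z -> walk e (m + n) x z.
Proof.
elim: m x => [|m IH] x /=; first by move/eqP->.
case/existsP=> w /andP[exw wy] yz; apply/existsP; exists w.
by rewrite exw (IH _ wy yz).
Qed.

Lemma cwalk_walk P k x y : cwalk e P k x y -> walk e k x y.
Proof.
elim: k x => [|k IH] x /=; first by case/andP.
case/andP=> _ /existsP[w /andP[exw wy]]; apply/existsP; exists w.
by rewrite exw (IH _ wy).
Qed.

Lemma sub_cwalk (P Q : pred T) k x y :
  subpred P Q -> cwalk e P k x y -> cwalk e Q k x y.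
Proof.
move=> PQ; elim: k x => [|k IH] x /=; first by case/andP=> -> /PQ->.
case/andP=> /PQ-> /existsP[w /andP[exw wy]]; apply/existsP; exists w.
by rewrite exw (IH _ wy).
Qed.

Lemma cwalk_cat P m n x y z :
  cwalk e P m x y -> cwalk e P n y z -> cwalk e P (m + n) x z.
Proof.
elim: m x => [|m IH] x /=; first by case/andP=> /eqP->.
case/andP=> Px /existsP[w /andP[exw wy]] yz; rewrite Px; apply/existsP; exists w.
by rewrite exw (IH _ wy yz).
Qed.

Lemma walk_split_at_min (L : T -> nat) d a v : walk e d a v ->
  exists m d1 d2, [/\ d1 + d2 = d,
    cwalk e (fun x => L m <= L x) d1 a m & cwalk e (fun x => L m <= L x) d2 m v].
Proof.
elim: d a => [|d IH] a /=.
  by move/eqP->; exists v, 0, 0; rewrite /= eqxx leqnn.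
case/existsP=> w /andP[exw wv]; have [m [d1 [d2 [<- am mv]]]] := IH _ wv.
have [Lam | Lma] := leqP (L a) (L m).
  exists a, 0, (d1 + d2).+1; split=> //=; first by rewrite eqxx leqnn.
  rewrite leqnn; apply/existsP; exists w; rewrite exw /=.
  by apply: sub_cwalk (cwalk_cat am mv) => x; apply: leq_trans.
exists m, d1.+1, d2; split=> //=; rewrite (ltnW Lma); apply/existsP; exists w.
by rewrite exw.
Qed.

End Walks.

Section DistanceVectors.
Variables (T : finType) (e : rel T) (r : nat).

Lemma distrP a v : first_le_spec r (fun k => walk e k a v) (distr e r a v).
Proof. exact: first_leP. Qed.

Lemma mem_Nin_distr a v : (a \in Nin e r v) = (distr e r a v != None).
Proof.
rewrite inE; case: distrP => [k kr wk _ | noWalk].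
  by apply/existsP; exists (Ordinal (kr : k < r.+1)).
by apply/negbTE/existsP => -[k]; apply/negP/noWalk; rewrite -ltnS.
Qed.

Lemma distr_le_walk k a v :
  k <= r -> walk e k a v -> exists2 d, distr e r a v = Some d & d <= k.
Proof.
case: distrP => [d _ _ mind | noWalk] kr wk; first by exists d; last exact: mind.
by have := noWalk k kr; rewrite wk.
Qed.

Lemma nu_le_num_Dvec X : nu e r X <= num_Dvec e r X.
Proof.
pose h (s : seq (option nat)) := [set a in X | nth None s (index a (enum X)) != None].
rewrite /nu (@eq_imset _ _ _ (fun v => h (Dvec e r X v))) ?card_imset_le_size_undup // => v.
apply/setP => a; rewrite in_setI mem_Nin_distr inE andbC; case: (boolP (a \in X)) => //= aX.
by rewrite /Dvec (nth_map a) ?nth_index ?index_mem ?mem_enum.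
Qed.

Variables (L : T -> nat) (X : {set T}).

Lemma WReach_refl v : v \in WReach e r L v.
Proof. by rewrite inE; apply/existsP; exists ord0; rewrite /= eqxx leqnn. Qed.

Definition reach_set : {set T} := \bigcup_(a in X) WReach e r L a.

Definition dist_profile v : {set T * 'I_r.+1} :=
  [set p | [&& p.1 \in reach_set, p.1 \in WReach e r L v
             & distr e r p.1 v == Some (val p.2)]].

Definition dist_via (P : {set T * 'I_r.+1}) a : option nat :=
  first_le r (fun k => [exists p in P, exists d : 'I_r.+1,
                          (d + p.2 <= k) && walk e d a p.1]).

Lemma distr_via_profile a v : a \in X -> distr e r a v = dist_via (dist_profile v) a.
Proof.
move=> aX; apply: eq_first_le => k kr.
  case/(walk_split_at_min L) => m [d1 [d2 [d12 am mv]]].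
  have d1r : d1 < r.+1 by rewrite ltnS (leq_trans _ kr) // -d12 leq_addr.
  have d2r : d2 <= r by rewrite (leq_trans _ kr) // -d12 leq_addl.
  have mY : m \in reach_set.
    apply/bigcupP; exists a; rewrite // inE; apply/existsP.
    by exists (Ordinal d1r); rewrite am orbT.
  have mWv : m \in WReach e r L v.
    by rewrite inE; apply/existsP; exists (Ordinal (d2r : d2 < r.+1)); rewrite mv.
  have [d md dd2] := distr_le_walk d2r (cwalk_walk mv).
  have dr : d < r.+1 by rewrite ltnS (leq_trans dd2).
  exists k => //; apply/existsP; exists (m, Ordinal dr); rewrite inE /= mY mWv md eqxx /=.
  by apply/existsP; exists (Ordinal d1r); rewrite (cwalk_walk am) andbT /= -d12 leq_add2l.
case/existsP=> [[w d']] /andP[]; rewrite inE /= => /and3P[_ _ wv] /existsP[d /andP[dk wd]].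
move: wv; case: distrP => // j _ wj _ /eqP[jd'].
by exists (d + d') => //; rewrite -jd' (walk_cat wd wj).
Qed.

Variables (c : nat) (card_WReach : forall v, #|WReach e r L v| <= c).

Lemma card_reach_set : #|reach_set| <= #|X| * c.
Proof. by rewrite (leq_trans (leq_card_bigcup _ _)) // -sum_nat_const leq_sum. Qed.

Lemma card_dist_profile v : #|dist_profile v| <= c.
Proof.
have fst_inj : {in dist_profile v &, injective fst}.
  move=> [w k] [w' k']; rewrite !inE /= => /and3P[_ _ /eqP wk] /and3P[_ _ /eqP wk'] ww'.
  by move: wk'; rewrite -ww' wk => -[/val_inj ->]; rewrite ww'.
rewrite -(card_in_imset fst_inj) (leq_trans _ (card_WReach v)) //.
by apply/subset_leq_card/subsetP => w /imsetP[p]; rewrite inE => /and3P[_ + _] ->.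
Qed.

Lemma num_Dvec_le_card_reach_set : num_Dvec e r X <= (#|reach_set| * r.+1).+1 ^ c.
Proof.
rewrite -[r.+1]card_ord -cardsT -cardsX; apply: leq_trans (card_small_subsets _ c).
pose decode P := [seq dist_via P a | a <- enum X].
apply: (size_undup_map_le (f := dist_profile) (G := decode)) => v.
  rewrite inE card_dist_profile andbT; apply/subsetP => p.
  by rewrite !inE andbT => /and3P[].
by apply/eq_in_map => a; rewrite mem_enum; apply: distr_via_profile.
Qed.

Lemma num_Dvec_le : X != set0 -> num_Dvec e r X <= ((r + 2) * c * #|X|) ^ c.
Proof.
case/set0Pn => x xX.
have c_gt0 : 0 < c.
  by apply: leq_trans (card_WReach x); apply/card_gt0P; exists x; apply: WReach_refl.
have X_gt0 : 0 < #|X| by apply/card_gt0P; exists x.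
apply: leq_trans num_Dvec_le_card_reach_set _; rewrite leq_exp2r //.
have := card_reach_set; nia.
Qed.

End DistanceVectors.

Lemma wcol_witness (T : finType) (e : rel T) r :
  exists L : T -> nat, forall v, #|WReach e r L v| <= wcol e r.
Proof.
apply: (big_ind (fun n => exists L : T -> nat, forall v, #|WReach e r L v| <= n)).
- by exists (fun=> 0) => v; apply: max_card.
- by move=> m n Hm Hn; rewrite /minn; case: ifP.
- by move=> L _; exists (fun x => nat_of_ord (L x)) => v; apply: leq_bigmax.
Qed.

Theorem mainTheorem14 (T : finType) (e : rel T) (X : {set T}) (r : nat) :
  X != set0 -> 1 <= r ->
  let c := wcol e r in
  num_Dvec e r X <= ((r + 2) * c * #|X|) ^ c /\
  nu e r X <= ((r + 2) * c * #|X|) ^ c.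
Proof.
move=> X0 _ c.
(* The bound holds for r = 0 as well. *)
have [L card_WReach] := wcol_witness e r.
have Dvec_le := num_Dvec_le card_WReach X0.
by split=> //; apply: leq_trans (nu_le_num_Dvec _ _ _) Dvec_le.
Qed.
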